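(* For the measure $\mu$ defined by $\int_{\mathbb{L}}\varphi\,\mathrm{d}\mu=\mathbb{E}[\varphi(\Lambda(X,Y))/d(X,Y)^2]$, with $X,Y$ independent non-backtracking random walks on $\mathbb{T}$ from the root, one has $$\mu\langle x,y\rangle=\tfrac{8}{9}\cdot 2^{-d(x,y)}\quad\text{for all vertices }x\neq y\text{ of }\mathbb{T}.$$
   Context: $\mathbb{T}$ is the $3$-regular tree with graph distance $d$ and root $\varnothing$. Rays are infinite non-backtracking paths from $\varnothing$, and $\partial\mathbb{T}$ is the set of rays. For distinct rays, $\xi\wedge\eta$ is their last common vertex, and the metric on $\partial\mathbb{T}$ is $d(\xi,\eta)=2^{-d(\varnothing,\xi\wedge\eta)}$. $\Lambda(\xi,\eta)$ is the bi-infinite geodesic (line) with ends $\xi,\eta$, and $\mathbb{L}$ is the set of lines. $\langle x,y\rangle$ is the set of lines passing through both $x$ and $y$. A non-backtracking random walk from the root is viewed as a random element of $\partial\mathbb{T}$. *)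

From HB Require Import structures.
From mathcomp Require Import all_boot all_order all_algebra.
From mathcomp Require Import all_classical all_reals all_analysis.
Set Implicit Arguments. Unset Strict Implicit. Unset Printing Implicit Defensive.
Import Order.TTheory GRing.Theory Num.Theory.
Local Open Scope ring_scope.

(* The 3-regular tree T: vertices are reduced words over the alphabet 'I_3
   (no two consecutive letters equal), i.e. the Cayley graph of Z2*Z2*Z2.
   The root is the empty word; w is adjacent to w ++ [:: i] when reduced. *)
Definition reduced (w : seq 'I_3) : bool := sorted (fun a b : 'I_3 => a != b) w.

Fixpoint lcp (u v : seq 'I_3) : nat :=
  match u, v with
  | a :: u', b :: v' => if a == b then (lcp u' v').+1 else 0%N
  | _, _ => 0%N
  end.

Definition dist (u v : seq 'I_3) : nat := (size u + size v - 2 * lcp u v)%N.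

(* A ray (infinite non-backtracking path from the root) is encoded by the
   infinite sequence of its letters; its vertex at depth m is [ray_prefix xi m]. *)
Definition is_ray (xi : nat -> 'I_3) : Prop := forall n, xi n != xi n.+1.
Definition ray_prefix (xi : nat -> 'I_3) (m : nat) : seq 'I_3 := mkseq xi m.

(* depth d(root, xi /\ eta) of the last common vertex of two distinct rays *)
Definition meet_depth (xi eta : nat -> 'I_3) : nat :=
  match pselect (exists n, xi n != eta n) with
  | left h => ex_minn (P := fun n => xi n != eta n) (ex_intro _ _ (proj2_sig (cid h)))
  | right _ => 0%N
  end.

Definition in_line (v : seq 'I_3) (xi eta : nat -> 'I_3) : Prop :=
  exists m, (meet_depth xi eta <= m)%N /\ (v = ray_prefix xi m \/ v = ray_prefix eta m).

(* phi(Lambda(xi,eta)) / d(xi,eta)^2 with phi the indicator of <x,y>,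
   where d(xi,eta) = 2^(-meet_depth); set to 0 on the null event xi = eta. *)
Definition mu_integrand (R : realType) (x y : seq 'I_3) (xi eta : nat -> 'I_3)
  : \bar R :=
  if `[< exists n, xi n != eta n >] && `[< in_line x xi eta >]
     && `[< in_line y xi eta >]
  then ((4 : R) ^+ meet_depth xi eta)%:E else 0%E.

(* probability that the first (size w) steps of a non-backtracking random walk
   from the root follow the word w: 1/3 for the first step, 1/2 afterwards *)
Definition walk_prob (R : realType) (w : seq 'I_3) : R :=
  if reduced w then
    (if w is [::] then 1 else 3^-1 * 2 ^- (size w).-1)
  else 0.

From HB Require Import structures.
From mathcomp Require Import all_boot all_order all_algebra.
From mathcomp Require Import all_classical all_reals all_analysis.
From mathcomp Require Import ring zify measurable_realfun.
Import Order.TTheory GRing.Theory Num.Theory.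
Local Open Scope classical_set_scope.
Local Open Scope ring_scope.
Set Implicit Arguments. Unset Strict Implicit.

(* Seen from the root, a line with ends xi, eta passes through a vertex v iff
   one of the two rays passes through v at depth at least the meet depth.
   If x and y fork at depth c = lcp x y, the line meets both exactly when one
   walk passes through x and the other through y, and then the ends meet at
   depth c: the weight 4^c times 2 P(X through x) P(Y through y) equals
   8/9 2^-d(x,y).  If x is an ancestor of y, one walk passes through y and the
   other leaves the geodesic from the root to y at some depth k <= |x|; the
   weights 4^k times the probabilities of these events form a geometric sum
   with the same value.  The law of the walks is only given for paths of equal
   length; it extends to all pairs of paths because the masses of the one-step
   extensions of a path add up to the mass of the path. *)

Definition ray_through (xi : nat -> 'I_3) (u : seq 'I_3) : Prop :=
  ray_prefix xi (size u) = u.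

Definition agree (xi eta : nat -> 'I_3) (k : nat) : Prop :=
  forall i, (i < k)%N -> xi i = eta i.

Lemma ray_throughP xi u :
  ray_through xi u <-> forall i, (i < size u)%N -> xi i = nth ord0 u i.
Proof.
rewrite /ray_through /ray_prefix; split=> [h i hi|h].
  by rewrite -[in RHS]h nth_mkseq.
apply: (@eq_from_nth _ ord0); rewrite size_mkseq // => i hi.
by rewrite nth_mkseq // h.
Qed.

Lemma ray_through_rcons xi u i :
  ray_through xi (rcons u i) <-> ray_through xi u /\ xi (size u) = i.
Proof.
rewrite /ray_through /ray_prefix size_rcons mkseqS.
by split=> [/rcons_inj [-> ->]|[-> ->]].
Qed.

Lemma ray_through_agree xi eta u k : ray_through xi u -> (k <= size u)%N ->
  ray_through eta (take k u) <-> agree xi eta k.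
Proof.
move=> /ray_throughP xi_u le_k; rewrite ray_throughP size_takel //.
have xi_take i : (i < k)%N -> xi i = nth ord0 (take k u) i.
  by move=> lt_ik; rewrite nth_take // xi_u //; exact: leq_trans lt_ik le_k.
by split=> h i lt_ik; [rewrite xi_take // h | rewrite -h // xi_take].
Qed.

Lemma ray_through_take xi u k : ray_through xi u -> ray_through xi (take k u).
Proof.
move=> xi_u; have [le_ku|lt_uk] := leqP k (size u).
  by apply/(ray_through_agree xi xi_u le_ku).
by rewrite take_oversize // ltnW.
Qed.

Lemma agreeS xi eta k : agree xi eta k.+1 <-> agree xi eta k /\ xi k = eta k.
Proof.
split=> [h|[h hk] i]; first by split=> [i lt_ik|]; apply: h => //; exact: ltnW.
by rewrite ltnS leq_eqVlt => /orP[/eqP ->|/h].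
Qed.

Lemma meet_depth_spec xi eta k : (exists n, xi n != eta n) ->
  meet_depth xi eta = k <-> agree xi eta k /\ xi k != eta k.
Proof.
rewrite /meet_depth; case: pselect => [ex _|//]; case: ex_minnP => m neq_m min_m.
split=> [<-|[agr neq_k]].
  split=> // i lt_im; apply/eqP; apply: contraTT lt_im => /min_m; by rewrite leqNgt.
apply/eqP; rewrite eqn_leq min_m // leqNgt; apply/negP => /agr eq_m.
by rewrite eq_m eqxx in neq_m.
Qed.

Lemma meet_depthC xi eta : meet_depth xi eta = meet_depth eta xi.
Proof.
have [ex|nex] := pselect (exists n, xi n != eta n).
  have ex' : exists n, eta n != xi n by case: ex => n; exists n; rewrite eq_sym.
  have [agr neq] := (meet_depth_spec (meet_depth xi eta) ex).1 erefl.
  by apply/esym/(meet_depth_spec _ ex'); rewrite eq_sym; split=> // i /agr ->.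
rewrite /meet_depth; case: pselect => [//|_]; case: pselect => [[n hn]|//].
by exfalso; apply: nex; exists n; rewrite eq_sym.
Qed.

Lemma in_lineP v xi eta : in_line v xi eta <->
  (meet_depth xi eta <= size v)%N /\ (ray_through xi v \/ ray_through eta v).
Proof.
rewrite /in_line /ray_through; split=> [[m [le_m [->|->]]]|[le_v [<-|<-]]].
- by rewrite /ray_prefix size_mkseq; split=> //; left.
- by rewrite /ray_prefix size_mkseq; split=> //; right.
- by exists (size v); split=> //; left.
- by exists (size v); split=> //; right.
Qed.

Section Integrand.
Variable R : realType.

Lemma mu_integrandC x y xi eta : mu_integrand R x y xi eta = mu_integrand R y x xi eta.
Proof. by rewrite /mu_integrand andbAC. Qed.

Lemma mu_integrand_raysC x y xi eta :
  mu_integrand R x y xi eta = mu_integrand R x y eta xi.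
Proof.
have diffC : (exists n, xi n != eta n) = (exists n, eta n != xi n).
  by apply/propext; split=> -[n h]; exists n; rewrite eq_sym.
have in_lineC v : in_line v xi eta = in_line v eta xi.
  by apply/propext; rewrite !in_lineP meet_depthC; split=> -[? h]; split=> //; tauto.
by rewrite /mu_integrand meet_depthC diffC !in_lineC.
Qed.

Section Fork.
Variables (x y : seq 'I_3) (c : nat).
Hypotheses (lt_cx : (c < size x)%N) (lt_cy : (c < size y)%N)
  (fork_c : nth ord0 x c != nth ord0 y c) (take_c : take c x = take c y).

Lemma ray_through_fork xi : ray_through xi x -> ray_through xi y -> False.
Proof.
move=> /ray_throughP xi_x /ray_throughP xi_y.
by move: fork_c; rewrite -xi_x // -xi_y // eqxx.
Qed.

Lemma meet_depth_fork xi eta : ray_through xi x -> ray_through eta y ->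
  (exists n, xi n != eta n) /\ meet_depth xi eta = c.
Proof.
move=> xi_x eta_y; have neq_c : xi c != eta c.
  by move/ray_throughP: xi_x => ->//; move/ray_throughP: eta_y => ->.
have ex : exists n, xi n != eta n by exists c.
split=> //; apply/(meet_depth_spec _ ex); split=> //.
by apply/(ray_through_agree eta xi_x (ltnW lt_cx)); rewrite take_c; apply: ray_through_take.
Qed.

Lemma mu_integrand_fork_through xi eta : ray_through xi x -> ray_through eta y ->
  mu_integrand R x y xi eta = ((4 : R) ^+ c)%:E.
Proof.
move=> xi_x eta_y; have [ex meet_c] := meet_depth_fork xi_x eta_y.
rewrite /mu_integrand meet_c asboolT // asboolT; last first.
  by apply/in_lineP; rewrite meet_c; split; [exact: ltnW|left].
by rewrite asboolT //; apply/in_lineP; rewrite meet_c; split; [exact: ltnW|right].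
Qed.

Lemma mu_integrand_fork xi eta : mu_integrand R x y xi eta =
  ((4 : R) ^+ c * (`[< ray_through xi x /\ ray_through eta y >]%:R
                  + `[< ray_through xi y /\ ray_through eta x >]%:R))%:E.
Proof.
case: (asboolP (ray_through xi x /\ ray_through eta y)) => [[xi_x eta_y]|nA].
  rewrite asboolF ?addr0 ?mulr1; last by case=> /(ray_through_fork xi_x).
  exact: mu_integrand_fork_through.
case: (asboolP (ray_through xi y /\ ray_through eta x)) => [[xi_y eta_x]|nB].
  by rewrite add0r mulr1 mu_integrand_raysC; apply: mu_integrand_fork_through.
rewrite add0r mulr0 /mu_integrand; case: ifP => // /andP[/andP[_ /asboolP]].
move=> /in_lineP[_ [xi_x|eta_x]] /asboolP /in_lineP[_ [xi_y|eta_y]].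
- by case: (ray_through_fork xi_x xi_y).
- by case: nA.
- by case: nB.
- by case: (ray_through_fork eta_x eta_y).
Qed.
End Fork.

Definition branch_at (xi eta : nat -> 'I_3) (y : seq 'I_3) (k : nat) : Prop :=
  ray_through xi y /\ ray_through eta (take k y) /\ ~ ray_through eta (take k.+1 y).

Definition branch_sum (xi eta : nat -> 'I_3) (y : seq 'I_3) (n : nat) : R :=
  \sum_(k < n) (4 : R) ^+ k * `[< branch_at xi eta y k >]%:R.

Lemma branch_sum_ge0 xi eta y n : 0 <= branch_sum xi eta y n.
Proof. by apply: sumr_ge0 => k _; rewrite mulr_ge0 ?exprn_ge0. Qed.

Lemma branch_atE xi eta y k : ray_through xi y -> (k < size y)%N ->
  (exists n, xi n != eta n) -> branch_at xi eta y k <-> meet_depth xi eta = k.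
Proof.
move=> xi_y lt_ky ex; rewrite meet_depth_spec // /branch_at.
rewrite (ray_through_agree eta xi_y (ltnW lt_ky)) (ray_through_agree eta xi_y lt_ky) agreeS.
split=> [[_ [agr nagr]]|[agr neq]]; split=> //.
  by apply/eqP => eq_k; apply: nagr.
by split=> // -[_ eq_k]; rewrite eq_k eqxx in neq.
Qed.

Lemma sum_ord_natr_eq n j (F : nat -> R) :
  \sum_(k < n) F k * ((k : nat) == j)%:R = if (j < n)%N then F j else 0.
Proof.
elim: n => [|n IH]; first by rewrite big_ord0.
rewrite big_ord_recr /= IH ltnS.
by case: (ltngtP j n) => h /=; rewrite ?mulr0 ?addr0 ?mulr1 ?add0r // h.
Qed.

Section Prefix.
Variables (x y : seq 'I_3).
Hypotheses (pre_xy : prefix x y) (lt_xy : (size x < size y)%N).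

Let x_take : x = take (size x) y.
Proof. by move: pre_xy; rewrite prefixE => /eqP. Qed.

Lemma mu_integrand_prefix_through xi eta : ray_through xi y -> ~ ray_through eta y ->
  mu_integrand R x y xi eta = (branch_sum xi eta y (size x).+1)%:E.
Proof.
move=> xi_y not_eta_y.
have not_agree : ~ agree xi eta (size y).
  by move/(ray_through_agree eta xi_y (leqnn _)); rewrite take_size.
have ex : exists n, xi n != eta n.
  apply: contrapT => nex; apply: not_agree => i _; apply/eqP/negPn/negP => neq.
  by apply: nex; exists i.
have [agr neq] := (meet_depth_spec (meet_depth xi eta) ex).1 erefl.
set j := meet_depth xi eta in agr neq *.
have lt_jy : (j < size y)%N.
  rewrite ltnNge; apply/negP => le_yj; apply: not_agree => i lt_iy.
  by apply: agr; exact: leq_trans lt_iy le_yj.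
have -> : branch_sum xi eta y (size x).+1 =
    \sum_(k < (size x).+1) (4 : R) ^+ k * ((k : nat) == j)%:R.
  apply: eq_bigr => k _; suff -> : `[< branch_at xi eta y k >] = (k == j :> nat) by [].
  have lt_ky : (k < size y)%N by exact: leq_ltn_trans (ltnSE (ltn_ord k)) lt_xy.
  rewrite eq_sym; apply/idP/eqP => [/asboolP/(branch_atE xi_y lt_ky ex) //|jk].
  by apply/asboolP/(branch_atE xi_y lt_ky ex).
have y_on : in_line y xi eta by apply/in_lineP; split; [exact: ltnW|left].
have x_onE : `[< in_line x xi eta >] = (j < (size x).+1)%N.
  apply/asboolP/idP => [/in_lineP[le_jx _]|le_jx]; first by rewrite ltnS.
  apply/in_lineP; rewrite -ltnS; split=> //.
  by left; rewrite x_take; apply: ray_through_take.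
rewrite sum_ord_natr_eq /mu_integrand -/j (asboolT ex) (asboolT y_on) andbT x_onE.
by case: (j < (size x).+1)%N.
Qed.

Lemma mu_integrand_prefix xi eta : mu_integrand R x y xi eta =
  (branch_sum xi eta y (size x).+1 + branch_sum eta xi y (size x).+1)%:E.
Proof.
have branch_sum0 xi' eta' : (ray_through xi' y -> ray_through eta' y) ->
    branch_sum xi' eta' y (size x).+1 = 0.
  move=> thr; apply: big1 => k _; rewrite asboolF ?mulr0 // => -[xi'_y [_]].
  by apply; apply/ray_through_take/thr.
case: (pselect (ray_through xi y)) => xi_y; case: (pselect (ray_through eta y)) => eta_y.
- rewrite !branch_sum0 ?addr0 //; rewrite /mu_integrand; case: ifP => //.
  move=> /andP[/andP[/asboolP ex /asboolP /in_lineP[le_x _]] _].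
  have [_ neq] := (meet_depth_spec (meet_depth xi eta) ex).1 erefl.
  have agr_y : agree xi eta (size y).
    by apply/(ray_through_agree eta xi_y (leqnn _)); rewrite take_size.
  by rewrite agr_y ?eqxx // in neq; exact: leq_ltn_trans le_x lt_xy.
- by rewrite (branch_sum0 eta xi) ?addr0 //; exact: mu_integrand_prefix_through.
- rewrite (branch_sum0 xi eta) ?add0r // mu_integrand_raysC.
  exact: mu_integrand_prefix_through.
- rewrite !branch_sum0 ?addr0 //; rewrite /mu_integrand; case: ifP => //.
  by move=> /andP[_ /asboolP /in_lineP[_ []]].
Qed.

End Prefix.
End Integrand.

Section WalkProb.
Variable R : realType.

Lemma reduced_take u k : reduced u -> reduced (take k u).
Proof. by case: u => [|a u] //; case: k => [|k] //= h; exact: take_path. Qed.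

Lemma walk_prob_reduced u : reduced u ->
  walk_prob R u = if size u is k.+1 then 3^-1 / 2 ^+ k else 1.
Proof. by rewrite /walk_prob => ->; case: u. Qed.

Lemma sum_walk_prob_rcons u : \sum_(i < 3) walk_prob R (rcons u i) = walk_prob R u.
Proof.
rewrite /walk_prob; case: u => [|a u].
  rewrite /= (eq_bigr (fun=> 3^-1 : R)); last by move=> i _; rewrite expr0 invr1 mulr1.
  by rewrite sumr_const card_ord; field.
rewrite /reduced /=; under eq_bigr => i _ do rewrite rcons_path size_rcons /=.
case: (path _ a u) => /=; last by rewrite big1.
rewrite -big_mkcond /= sumr_const.
have -> : #|[pred i | last a u != i]| = 2%N.
  transitivity #|predC1 (last a u)|; last by rewrite cardC1 card_ord.
  by apply: eq_card => i; rewrite !inE eq_sym.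
by rewrite exprS -mulr_natr; field; rewrite expf_neq0.
Qed.

Lemma sum_branch_weights y a : reduced y -> (a < size y)%N ->
  \sum_(k < a.+1) (4 : R) ^+ k * (walk_prob R (take k y) - walk_prob R (take k.+1 y))
  = 2 / 3 * 2 ^+ a.
Proof.
move=> red_y; have wp_take k : (k <= size y)%N ->
    walk_prob R (take k y) = if k is k'.+1 then 3^-1 / 2 ^+ k' else 1.
  by move=> le_ky; rewrite walk_prob_reduced ?reduced_take // size_takel.
elim: a => [|a IH] lt_ay.
  by rewrite big_ord_recr big_ord0 /= !wp_take //; field.
have lt_a : (a < size y)%N := ltnW lt_ay.
rewrite big_ord_recr /= IH // !wp_take //.
rewrite (_ : (4 : R) = 2 * 2) ?exprMn ?exprS; last by field.
by field; rewrite ?mulf_neq0 ?expf_neq0.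
Qed.

Lemma fork_weight x y c : reduced x -> reduced y -> (c < size x)%N -> (c < size y)%N ->
  (4 : R) ^+ c * (walk_prob R x * walk_prob R y + walk_prob R y * walk_prob R x)
  = 8 / 9 * 2 ^- (size x + size y - 2 * c).
Proof.
move=> red_x red_y /subnKC ex /subnKC ey; rewrite !walk_prob_reduced //.
move: (size x - c.+1)%N (size y - c.+1)%N ex ey => p q <- <-.
rewrite !addSn /= (_ : ((c + p).+1 + (c + q).+1 - 2 * c = (p + q).+2)%N); last by lia.
rewrite (_ : (4 : R) = 2 * 2) ?exprMn ?exprS ?exprD; last by field.
by field; rewrite ?expf_neq0.
Qed.

Lemma prefix_weight y a : reduced y -> (a < size y)%N ->
  \sum_(k < a.+1) (4 : R) ^+ k *
    (walk_prob R y * (walk_prob R (take k y) - walk_prob R (take k.+1 y)))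
  = 4 / 9 * 2 ^- (size y - a).
Proof.
move=> red_y lt_ay.
under eq_bigr do rewrite mulrCA.
rewrite -big_distrr /= sum_branch_weights // walk_prob_reduced //.
move/subnKC: lt_ay; move: (size y - a.+1)%N => p <-.
rewrite (_ : (a.+1 + p - a = p.+1)%N); last by lia.
by rewrite addSn /= exprD !exprS; field; rewrite ?expf_neq0.
Qed.

End WalkProb.

Section WalkLaw.
Variables (R : realType) (d : measure_display) (Omega : measurableType d)
  (P : probability Omega R).

Definition coord_measurable (Z : Omega -> nat -> 'I_3) : Prop :=
  forall n (i : 'I_3), measurable [set w | Z w n = i].

Definition joint_event (X Y : Omega -> nat -> 'I_3) (u v : seq 'I_3) : set Omega :=
  [set w | ray_through (X w) u /\ ray_through (Y w) v].

Definition walk_law (X Y : Omega -> nat -> 'I_3) : Prop :=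
  forall u v, size u = size v ->
  P (joint_event X Y u v) = (walk_prob R u * walk_prob R v)%:E.

Lemma measurable_ray_through Z u : coord_measurable Z ->
  measurable [set w | ray_through (Z w) u].
Proof.
move=> mZ; rewrite (_ : [set w | _] =
  \bigcap_(i in [set i | (i < size u)%N]) [set w | Z w i = nth ord0 u i]).
  by apply: bigcap_measurableType => i _; exact: mZ.
by apply/seteqP; split=> w /=; rewrite ray_throughP.
Qed.

Lemma measurable_joint_event X Y u v : coord_measurable X -> coord_measurable Y ->
  measurable (joint_event X Y u v).
Proof. by move=> mX mY; apply: measurableI; exact: measurable_ray_through. Qed.

Lemma joint_eventC X Y u v : joint_event X Y u v = joint_event Y X v u.
Proof. by apply/seteqP; split=> w []. Qed.

Lemma walk_lawC X Y : walk_law X Y -> walk_law Y X.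
Proof. by move=> law u v e; rewrite joint_eventC law 1?mulrC. Qed.

Lemma measure_coord_partition Z n E : coord_measurable Z -> measurable E ->
  P E = \sum_(i < 3) P (E `&` [set w | Z w n = i]).
Proof.
move=> mZ mE; rewrite -measure_bigsetU_ord //.
- congr (P _); apply/seteqP; split=> [w Ew|w]; rewrite -bigcup_seq_cond.
    by exists (Z w n); rewrite //= mem_index_enum.
  by case=> i _ [].
- by move=> i; apply: measurableI.
- by move=> i j _ _ [w [[_ <-] [_ <-]]].
Qed.

Lemma measure_joint_event_le X Y u v :
  coord_measurable X -> coord_measurable Y -> walk_law X Y -> (size u <= size v)%N ->
  P (joint_event X Y u v) = (walk_prob R u * walk_prob R v)%:E.
Proof.
move=> mX mY law /subnKC; move: (size v - size u)%N => m; elim: m u => [|m IH] u e.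
  by rewrite law // -e addn0.
rewrite (measure_coord_partition (size u) mX); last exact: measurable_joint_event.
transitivity (\sum_(i < 3) (walk_prob R (rcons u i) * walk_prob R v)%:E).
  apply: eq_bigr => i _; rewrite -IH ?size_rcons ?addSnnS //.
  congr (P _); apply/seteqP; split=> w; rewrite /joint_event /=.
    by move=> [[X_u Y_v] X_n]; split=> //; exact/ray_through_rcons.
  by move=> [/ray_through_rcons[X_u X_n] Y_v].
by rewrite sumEFin -big_distrl /= sum_walk_prob_rcons.
Qed.

Lemma measurable_indic_scaled (c : R) (Q : Omega -> Prop) :
  measurable [set w | Q w] -> measurable_fun setT (fun w => c * `[< Q w >]%:R).
Proof.
move=> mQ; apply: measurable_funM => //.
by rewrite (_ : (fun w => _) = \1_[set w | Q w]) //; exact: measurable_indic.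
Qed.

Lemma measurable_indic_sum n (c : nat -> R) (Q : nat -> Omega -> Prop) :
  (forall k, measurable [set w | Q k w]) ->
  measurable_fun setT (fun w => (\sum_(k < n) c k * `[< Q k w >]%:R)%:E).
Proof.
move=> mQ; apply/measurable_EFinP; apply: measurable_sum => k.
exact: measurable_indic_scaled.
Qed.

Lemma integral_indic_scaled (c : R) (Q : Omega -> Prop) : 0 <= c ->
  measurable [set w | Q w] ->
  (\int[P]_w (c * `[< Q w >]%:R)%:E = c%:E * P [set w | Q w])%E.
Proof.
move=> c_ge0 mQ; under eq_integral do rewrite EFinM.
rewrite ge0_integralZl_EFin //; first by rewrite integral_indic // setIT.
by apply/measurable_EFinP; exact: measurable_indic.
Qed.

Lemma integral_indic_sum n (c : nat -> R) (Q : nat -> Omega -> Prop) :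
  (forall k, 0 <= c k) -> (forall k, measurable [set w | Q k w]) ->
  (\int[P]_w (\sum_(k < n) c k * `[< Q k w >]%:R)%:E
   = \sum_(k < n) (c k)%:E * P [set w | Q k w])%E.
Proof.
move=> c_ge0 mQ; under eq_integral do rewrite -sumEFin.
rewrite ge0_integral_sum //.
- by apply: eq_bigr => k _; exact: integral_indic_scaled.
- by move=> k; apply/measurable_EFinP; exact: measurable_indic_scaled.
- by move=> k w _; rewrite lee_fin mulr_ge0.
Qed.

Section Law.
Variables (X Y : Omega -> nat -> 'I_3).
Hypotheses (mX : coord_measurable X) (mY : coord_measurable Y) (law : walk_law X Y).

Lemma measure_joint_event u v :
  P (joint_event X Y u v) = (walk_prob R u * walk_prob R v)%:E.
Proof.
have [le_uv|lt_vu] := leqP (size u) (size v).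
  exact: (measure_joint_event_le mX mY law le_uv).
by rewrite joint_eventC (measure_joint_event_le mY mX (walk_lawC law) (ltnW lt_vu)) mulrC.
Qed.

Lemma branch_event y k : [set w | branch_at (X w) (Y w) y k] =
  joint_event X Y y (take k y) `\` joint_event X Y y (take k.+1 y).
Proof.
apply/seteqP; split=> w; first by move=> [X_y [Y_k nY]]; split=> // -[].
by move=> [[X_y Y_k] nB]; do 2!split=> //; move=> Y_k1; apply: nB.
Qed.

Lemma measurable_branch y k : measurable [set w | branch_at (X w) (Y w) y k].
Proof. by rewrite branch_event; apply: measurableD; exact: measurable_joint_event. Qed.

Lemma measure_branch y k : P [set w | branch_at (X w) (Y w) y k] =
  (walk_prob R y * (walk_prob R (take k y) - walk_prob R (take k.+1 y)))%:E.
Proof.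
have mE u v : measurable (joint_event X Y u v) by exact: measurable_joint_event.
rewrite branch_event measureD ?mE //; last first.
  by apply: (le_lt_trans (probability_le1 P (mE _ _))); exact: ltry.
rewrite setIidr.
  by rewrite -[LHS]/(P _ - P _)%E !measure_joint_event -EFinB mulrBr.
move=> w [X_y Y_k]; split=> //; rewrite -(take_takel y (leqnSn k)).
exact: ray_through_take.
Qed.

Lemma integral_branch_sum y a : reduced y -> (a < size y)%N ->
  (\int[P]_w (branch_sum R (X w) (Y w) y a.+1)%:E
   = (4 / 9 * 2 ^- (size y - a))%:E)%E.
Proof.
move=> red_y lt_ay.
rewrite (@integral_indic_sum a.+1 (fun k => 4 ^+ k)
  (fun k w => branch_at (X w) (Y w) y k)) //; last exact: measurable_branch.
under eq_bigr do rewrite measure_branch -EFinM.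
by rewrite sumEFin prefix_weight.
Qed.

End Law.
End WalkLaw.

Lemma lcp_spec u v : [/\ (lcp u v <= size u)%N, (lcp u v <= size v)%N,
  take (lcp u v) u = take (lcp u v) v &
  (lcp u v < size u)%N -> (lcp u v < size v)%N ->
    nth ord0 u (lcp u v) != nth ord0 v (lcp u v)].
Proof.
elim: u v => [|a u IH] [|b v] //=.
case: eqP => [<-|/eqP neq] //=; first by have [? ? -> ?] := IH v.
Qed.

Lemma lcpC u v : lcp u v = lcp v u.
Proof.
by elim: u v => [|a u IH] [|b v] //=; rewrite eq_sym; case: eqP => // _; rewrite IH.
Qed.

Lemma prefix_lcpE u v : prefix u v = (lcp u v == size u).
Proof.
apply/idP/eqP => [|lcp_u].
  by elim: u v => [|a u IH] [|b v] //= /andP[/eqP <- /IH ->]; rewrite eqxx.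
have [_ _ take_uv _] := lcp_spec u v.
by rewrite prefixE -lcp_u -take_uv lcp_u take_size.
Qed.

Lemma dist_prefix u v : prefix u v -> dist u v = (size v - size u)%N.
Proof.
by rewrite prefix_lcpE /dist => /eqP ->; rewrite mul2n -addnn subnDA addKn.
Qed.

Lemma distC u v : dist u v = dist v u.
Proof. by rewrite /dist addnC lcpC. Qed.

Section Integrals.
Variables (R : realType) (d : measure_display) (Omega : measurableType d)
  (P : probability Omega R) (X Y : Omega -> nat -> 'I_3).
Hypotheses (mX : coord_measurable X) (mY : coord_measurable Y) (law : walk_law P X Y).

Lemma integral_fork x y : reduced x -> reduced y ->
  (lcp x y < size x)%N -> (lcp x y < size y)%N ->
  (\int[P]_w mu_integrand R x y (X w) (Y w) = (8 / 9 * 2 ^- dist x y)%:E)%E.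
Proof.
move=> red_x red_y lt_x lt_y; have [_ _ take_c fork_c] := lcp_spec x y.
under eq_integral do
  rewrite (mu_integrand_fork _ lt_x lt_y (fork_c lt_x lt_y) take_c) mulrDr EFinD.
have mXY u v : measurable [set w | ray_through (X w) u /\ ray_through (Y w) v].
  exact: measurable_joint_event.
rewrite ge0_integralD //; [|exact/measurable_EFinP/measurable_indic_scaled..].
rewrite !integral_indic_scaled // !(measure_joint_event mX mY law) -!EFinM -EFinD.
by rewrite -mulrDr fork_weight.
Qed.

Lemma integral_prefix x y : reduced y -> prefix x y -> x != y ->
  (\int[P]_w mu_integrand R x y (X w) (Y w) = (8 / 9 * 2 ^- dist x y)%:E)%E.
Proof.
move=> red_y pre_xy neq_xy; have lt_xy : (size x < size y)%N.
  move: (pre_xy); rewrite prefixE => /eqP take_x.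
  have le_xy : (size x <= size y)%N by rewrite -take_x size_take_min geq_minr.
  rewrite ltn_neqAle le_xy andbT; apply: contra neq_xy => /eqP e.
  by rewrite -take_x e take_size.
under eq_integral do rewrite (mu_integrand_prefix _ pre_xy lt_xy) EFinD.
rewrite ge0_integralD //.
2,4: by move=> w _; rewrite lee_fin branch_sum_ge0.
2: exact: (measurable_indic_sum (size x).+1 (fun k => 4 ^+ k) (measurable_branch mX mY y)).
2: exact: (measurable_indic_sum (size x).+1 (fun k => 4 ^+ k) (measurable_branch mY mX y)).
rewrite (integral_branch_sum mX mY law) ?(integral_branch_sum mY mX (walk_lawC law)) //.
by rewrite -EFinD dist_prefix //; congr _%:E; field.
Qed.

End Integrals.

Unset Implicit Arguments. Set Strict Implicit.

Theorem mainTheorem4 (R : realType) (d : measure_display) (Omega : measurableType d)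
  (P : probability Omega R) (X Y : Omega -> nat -> 'I_3)
  (HXray : forall w, is_ray (X w)) (HYray : forall w, is_ray (Y w))
  (HXmeas : forall n (i : 'I_3), measurable [set w | X w n = i])
  (HYmeas : forall n (i : 'I_3), measurable [set w | Y w n = i])
  (Hlaw : forall u v : seq 'I_3, size u = size v ->
     P [set w | ray_prefix (X w) (size u) = u /\ ray_prefix (Y w) (size v) = v]
       = (walk_prob R u * walk_prob R v)%:E)
  (x y : seq 'I_3) (hx : reduced x) (hy : reduced y) (hxy : x != y) :
  (\int[P]_w mu_integrand R x y (X w) (Y w)
     = ((8 / 9 : R) * (2 : R) ^- dist x y)%:E)%E.
Proof.
have law : walk_law P X Y := Hlaw.
have [le_x le_y _ _] := lcp_spec x y.
have [lcp_x|neq_x] := eqVneq (lcp x y) (size x).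
  by apply: integral_prefix => //; rewrite prefix_lcpE lcp_x.
have [lcp_y|neq_y] := eqVneq (lcp x y) (size y).
  under eq_integral do rewrite mu_integrandC.
  by rewrite distC; apply: integral_prefix; rewrite 1?eq_sym // prefix_lcpE lcpC lcp_y.
by apply: integral_fork; rewrite // ltn_neqAle ?neq_x ?neq_y.
Qed.
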